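(* Let $G$ be a finite group of order $n\ge 3$, $f:G\to\mathbb{Q}$ a class function with $f(g)=f(g^{-1})$ for all $g\in G$, and $\Gamma_f=\operatorname{Cay}(G,f)$. Then $\operatorname{Deg}(\Gamma_f)$ divides $\varphi(n)/2$.
   Context: The Cayley colour graph $\operatorname{Cay}(G,f)$ has vertex set $G$ and adjacency matrix $[f(gh^{-1})]_{g,h\in G}$. $\operatorname{Deg}(\Gamma_f)$ is the degree over $\mathbb{Q}$ of the smallest subfield of $\mathbb{C}$ containing all eigenvalues of this matrix. $\varphi$ is Euler's totient function. *)

From HB Require Import structures.
From mathcomp Require Import all_boot all_order all_algebra all_fingroup all_field.
Set Implicit Arguments.
Unset Strict Implicit.
Unset Printing Implicit Defensive.
Import GRing.Theory.
Local Open Scope ring_scope.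

(* Adjacency matrix of the Cayley colour graph Cay(G, f), with the vertex set
   G = gT indexed through the canonical enumeration of gT:
   entry (g, h) is f (g * h^-1). *)
Definition cayley_mx (gT : finGroupType) (f : gT -> rat) : 'M[rat]_#|gT| :=
  \matrix_(i, j) f (enum_val i * (enum_val j)^-1)%g.

From HB Require Import structures.
From mathcomp Require Import all_boot all_order all_algebra all_fingroup all_field.
From mathcomp Require Import all_character.
From mathcomp Require Import ring.
Set Implicit Arguments.
Unset Strict Implicit.
Unset Printing Implicit Defensive.
Import GRing.Theory Num.Theory.
Local Open Scope ring_scope.

(* Since f is a class function, each eigenspace U of the Cayley
   matrix is a module for the left regular representation, and taking traces on
   U gives dim(U) a = sum_t f(t) chi_U(t) for the eigenvalue a.  Character values
   lie in Q(zeta_n), so a does too, and a is real because f(t^-1) = f(t) and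
   chi_U(t^-1) is the conjugate of chi_U(t).  A primitive element c of the field
   of eigenvalues therefore lies in E = Q(c, zeta + zeta^-1), a real subfield of
   Q(zeta_n) over which zeta (not real, as n > 2) has degree 2.  Hence
   [Q(c) : Q] divides [E : Q] = phi(n)/2. *)

Lemma adjoin_degree_minCpoly (K : fieldExtType rat) (io : {rmorphism K -> algC})
    (x : K) :
  adjoin_degree 1%VS x = (size (minCpoly (io x))).-1.
Proof.
have [p [Dp _] dv_p] := minCpolyP (io x).
have /polyOver1P[q Dq] := minPolyOver 1%VS x.
have io_alg : io \o in_alg K =1 ratr by move=> a; rewrite /= alg_num_field fmorph_rat.
have pq : p %| q.
  by rewrite -dv_p -(eq_map_poly io_alg) map_poly_comp -Dq fmorph_root root_minPoly.
have qp : q %| p.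
  rewrite -(dvdp_map (in_alg K)) -Dq minPoly_dvdp //; first by apply/polyOver1P; exists p.
  by rewrite -(fmorph_root io) -map_poly_comp (eq_map_poly io_alg) -Dp root_minCpoly.
have /eqp_size pq_size : p %= q by rewrite /eqp pq qp.
by rewrite Dp size_map_poly pq_size -(size_map_poly (in_alg K)) -Dq size_minPoly.
Qed.

Lemma num_field_primitive_element (L : fieldExtType rat) :
  exists g : L, \dim {:L} = adjoin_degree 1%VS g.
Proof.
have sepL : separable 1%VS {:L}.
  apply/separableP => x _; apply: pcharf0_separable.
  exact: ftrans (pchar_lalg L) (pchar_num _).
have Dg := eq_adjoin_separable_generator sepL (sub1v _).
by exists (separable_generator 1%VS {:L}); rewrite {1}Dg dim_Fadjoin dimv1 muln1.
Qed.

Lemma rmorph_adjoin_closed (K : fieldExtType rat) (io : {rmorphism K -> algC})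
    (P : algC -> Prop) (rs : seq K) :
    (forall a, P (ratr a)) -> (forall u v, P u -> P v -> P (u + v)) ->
    (forall u v, P u -> P v -> P (u * v)) -> (forall y, y \in rs -> P (io y)) ->
  forall x, x \in <<1 & rs>>%VS -> P (io x).
Proof.
move=> P_rat PD PM; elim/last_ind: rs => [|rs y IHrs] P_rs x.
  rewrite adjoin_nil subfield_closed => /vlineP[a ->].
  by rewrite alg_num_field fmorph_rat.
have P_y : P (io y) by apply: P_rs; rewrite mem_rcons mem_head.
have{IHrs} P_rs' : forall u, u \in <<1 & rs>>%VS -> P (io u).
  by apply: IHrs => u rs_u; apply: P_rs; rewrite mem_rcons inE rs_u orbT.
have P_exp k : P (io y ^+ k).
  elim: k => [|k IHk]; last by rewrite exprS; apply: PM.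
  by rewrite expr0 -(rmorph1 ratr); apply: P_rat.
rewrite adjoin_rcons => /Fadjoin_polyP[p /polyOverP p_rs ->].
rewrite horner_coef rmorph_sum; apply: (big_ind P) => // [|i _].
  by rewrite -(rmorph0 ratr); apply: P_rat.
by rewrite rmorphM rmorphXn; apply: PM; first apply: P_rs'.
Qed.

Lemma adjoin_deg_eq2_addV (F : fieldType) (K : fieldExtType F) (E : {subfield K})
    (x : K) :
  x != 0 -> x + x^-1 \in E -> x \notin E -> adjoin_degree E x = 2.
Proof.
move=> nz_x Ew Ex; set q := ('X - x%:P) * ('X - (x^-1)%:P).
have Eq : q \is a polyOver E.
  have -> : q = 'X^2 - (x + x^-1)%:P * 'X + 1.
    by rewrite /q polyCD -[1 in RHS]polyC1 -(mulfV nz_x) polyCM; ring.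
  by rewrite rpredD ?rpredB ?rpredM ?rpredX ?polyOverX ?polyOverC ?rpred1.
have /dvdp_leq : minPoly E x %| q by rewrite minPoly_dvdp // rootM root_XsubC eqxx.
rewrite mulf_neq0 ?polyXsubC_eq0 // size_mul ?polyXsubC_eq0 // !size_XsubC.
rewrite size_minPoly ltnS => /(_ isT) le_deg2.
apply/eqP; rewrite eqn_leq le_deg2 ltn_neqAle eq_sym adjoin_deg_eq1 Ex.
by rewrite /adjoin_degree.
Qed.

Lemma prim_root_conjC (n : nat) (z : algC) : n.-primitive_root z -> z^* = z^-1.
Proof.
move=> prim_z; have n_gt0 := prim_order_gt0 prim_z.
have norm_z : `|z| = 1.
  apply/eqP; rewrite -(pexpr_eq1 n_gt0) ?normr_ge0 //.
  by rewrite -normrX prim_expr_order // normr1.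
by rewrite invC_norm norm_z expr1n invr1 mul1r.
Qed.

Lemma cyclotomic_real_deg_dvd (n : nat) (Qn : fieldExtType rat)
    (QnC : {rmorphism Qn -> algC}) (w y : Qn) :
    (2 < n)%N -> n.-primitive_root w -> <<1; w>>%VS = fullv ->
    QnC y \is Creal ->
  (adjoin_degree 1%VS y %| (totient n)./2)%N.
Proof.
move=> n_gt2 prim_w genQn real_y.
have prim_z : n.-primitive_root (QnC w) by rewrite fmorph_primitive_root.
have conj_z := prim_root_conjC prim_z.
have nz_w : w != 0.
  apply: contra_eq_neq (prim_expr_order prim_w) => ->.
  by rewrite expr0n gtn_eqF ?(prim_order_gt0 prim_w) // eq_sym oner_neq0.
pose E := <<1 & [:: y; w + w^-1]>>%AS.
have Ew' : w + w^-1 \in E by rewrite seqv_sub_adjoin // !inE eqxx orbT.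
have real_E u : u \in E -> QnC u \is Creal.
  apply: (rmorph_adjoin_closed (P := fun c => c \is Creal)) => [a | | | v].
  - exact: Creal_Crat (Crat_rat a).
  - exact: realD.
  - exact: realM.
  rewrite !inE => /orP[] /eqP-> //.
  by rewrite rmorphD fmorphV /= -conj_z; apply/CrealP; rewrite raddfD /= conjCK addrC.
have Ew : w \notin E.
  apply: contraTN n_gt2 => /real_E/CrealP; rewrite conj_z -leqNgt => zV.
  apply: dvdn_leq => //; rewrite (prim_order_dvd prim_z) expr2 -{1}zV.
  by rewrite mulVf ?fmorph_eq0.
have dimQn : \dim {:Qn} = totient n.
  rewrite -genQn dim_Fadjoin dimv1 muln1 (adjoin_degree_minCpoly QnC).
  by rewrite (minCpoly_cyclotomic prim_z) size_cyclotomic.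
have dimE : \dim {:Qn} = (2 * \dim E)%N.
  have <- : <<E; w>>%VS = fullv.
    by apply/eqP; rewrite eqEsubv subvf -genQn adjoinSl // sub1v.
  by rewrite dim_Fadjoin adjoin_deg_eq2_addV.
rewrite -dimQn dimE mul2n doubleK.
have := field_dimS (_ : <<1; y>> <= E)%VS; rewrite dim_Fadjoin dimv1 muln1; apply.
by rewrite -adjoin_seq1 adjoin_seqSr // => u; rewrite inE => /eqP->; rewrite mem_head.
Qed.

Lemma sumr_delta (R : pzSemiRingType) (I : finType) (x : I) (F : I -> R) :
  \sum_i (i == x)%:R * F i = F x.
Proof.
rewrite (bigD1 x) //= eqxx mul1r big1 ?addr0 // => i /negbTE->.
by rewrite mul0r.
Qed.

Lemma enum_val_eqE (T : finType) (j : 'I_#|T|) (x : T) :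
  (enum_val j == x) = (j == enum_rank x).
Proof. by apply/eqP/eqP => [<-|->]; rewrite ?enum_valK ?enum_rankK. Qed.

Definition lreg_mx (gT : finGroupType) (t : gT) : 'M[algC]_#|gT| :=
  \matrix_(i, j) (enum_val i == t * enum_val j)%g%:R.

Lemma lreg_mx_repr (gT : finGroupType) : mx_repr [set: gT] (@lreg_mx gT).
Proof.
split=> [|x y _ _]; apply/matrixP => i k; rewrite !mxE.
  by rewrite mul1g (inj_eq enum_val_inj).
under eq_bigr => j _ do rewrite !mxE [enum_val j == _]enum_val_eqE mulrC.
by rewrite sumr_delta enum_rankK mulgA.
Qed.

Definition lreg_repr (gT : finGroupType) :
  mx_representation algC [set: gT]%G #|gT| :=
  MxRepresentation (lreg_mx_repr gT).

Section CayleyEigenvalues.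

Variables (gT : finGroupType) (f : gT -> rat).
Hypothesis f_class : forall x y : gT, f (x ^ y)%g = f x.

Local Notation A := (map_mx ratr (cayley_mx f)).

Lemma cayley_mx_lreg_sum : A = \sum_t ratr (f t) *: lreg_mx t.
Proof.
apply/matrixP => i j; rewrite summxE !mxE.
have e t : (enum_val i == t * enum_val j)%g = (t == enum_val i * (enum_val j)^-1)%g.
  by apply/eqP/eqP => ->; rewrite ?mulgK ?mulgKV.
under eq_bigr => t _ do rewrite !mxE e mulrC.
by rewrite sumr_delta.
Qed.

Lemma lreg_mx_cayleyC t : lreg_mx t *m A = A *m lreg_mx t.
Proof.
apply/matrixP => i k; rewrite !mxE.
have e j : (enum_val i == t * enum_val j)%g = (j == enum_rank (t^-1 * enum_val i))%g.
  by rewrite -enum_val_eqE; apply/eqP/eqP => ->; rewrite ?mulKg ?mulKVg.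
under eq_bigr => j _ do rewrite !mxE e.
under [RHS]eq_bigr => j _ do rewrite !mxE [enum_val j == _]enum_val_eqE mulrC.
rewrite !sumr_delta !enum_rankK; congr (ratr _).
by rewrite -[RHS](f_class _ t) conjgE invMg !mulgA mulgKV.
Qed.

Lemma cayley_eigenvalue_char a : eigenvalue A a ->
  exists d (rho : mx_representation algC [set: gT]%G d),
    (0 < d)%N /\ a *+ d = \sum_t ratr (f t) * cfRepr rho t.
Proof.
move=> Aa; set U := eigenspace A a.
have modU : mxmodule (lreg_repr gT) U.
  apply/mxmoduleP => t _; apply/sub_kermxP; rewrite /= -mulmxA.
  rewrite mulmxBr lreg_mx_cayleyC scalar_mxC -mulmxBl mulmxA.
  by rewrite mulmx_ker mul0mx.
set rho := submod_repr modU.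
exists (\rank U), rho; split; first by rewrite lt0n mxrank_eq0.
have rho_sum : \sum_t ratr (f t) *: rho t = a%:M.
  apply: (@val_submod_inj _ _ U); rewrite linear_sum -scalemx1 linearZ /=.
  have U_eig : val_submod 1%:M *m A = a *: val_submod (1%:M : 'M_(\rank U)).
    apply/eqP; rewrite -subr_eq0 -mul_mx_scalar -mulmxBr; apply/eqP/sub_kermxP.
    exact: val_submodP.
  rewrite -U_eig cayley_mx_lreg_sum mulmx_sumr; apply: eq_bigr => t _.
  rewrite linearZ /= -scalemxAr; congr (_ *: _).
  by rewrite -[rho t]mul1mx (val_submodJ modU) ?inE.
rewrite -mxtrace_scalar -rho_sum raddf_sum; apply: eq_bigr => t _.
by rewrite /= mxtraceZ cfunE inE mulr1n.
Qed.

Lemma cayley_eigenvalue_num_field (Qn : fieldExtType rat)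
    (QnC : {rmorphism Qn -> algC}) :
    (forall phi : 'CF([set: gT]), phi \is a character ->
       forall t, exists b, QnC b = phi t) ->
  forall a, eigenvalue A a -> exists b, QnC b = a.
Proof.
move=> Qn_char a /cayley_eigenvalue_char[d [rho [d_gt0 Da]]].
have /fin_all_exists[b Db] := Qn_char _ (cfRepr_char rho).
exists ((\sum_t ratr (f t) * b t) / d%:R).
rewrite fmorph_div rmorph_sum rmorph_nat /=.
under eq_bigr do rewrite rmorphM fmorph_rat Db.
by rewrite -Da -[a *+ d]mulr_natr mulfK // pnatr_eq0 -lt0n.
Qed.

Hypothesis f_inv : forall x : gT, f (x^-1)%g = f x.

Lemma cayley_eigenvalue_real a : eigenvalue A a -> a \is Creal.
Proof.
move=> /cayley_eigenvalue_char[d [rho [d_gt0 Da]]]; apply/CrealP.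
have nz_d : d%:R != 0 :> algC by rewrite pnatr_eq0 -lt0n.
apply: (mulIf nz_d); rewrite !mulr_natr -rmorphMn Da rmorph_sum.
rewrite (reindex_inj invg_inj); apply: eq_bigr => t _ /=.
by rewrite rmorphM /= fmorph_rat f_inv -char_inv ?cfRepr_char ?invgK.
Qed.

End CayleyEigenvalues.

Unset Implicit Arguments.

Theorem mainTheorem9 (gT : finGroupType) (f : gT -> rat)
  (hn : (3 <= #|gT|)%N)
  (hclass : forall x y : gT, f (x ^ y)%g = f x)
  (hinv : forall x : gT, f (x^-1)%g = f x)
  (L : fieldExtType rat) (iota : {rmorphism L -> algC}) (r : seq L)
  (hgen : <<1 & r>>%VS = fullv)
  (heig : forall a : algC,
      eigenvalue (map_mx ratr (cayley_mx f)) a = (a \in map iota r)) :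
  (\dim {:L} %| (totient #|gT|)./2)%N.
Proof.
set A := map_mx ratr (cayley_mx f) in heig.
have [Qn _ [QnC _ [w [prim_w genQn] Qn_char]]] := group_num_field_exists [set: gT]%G.
rewrite cardsT in prim_w.
have eig_Qn a : eigenvalue A a -> exists b, QnC b = a.
  apply: (cayley_eigenvalue_num_field hclass) => phi Nphi t.
  by have [b Db] := Qn_char _ _ phi Nphi t (cyclic.order_dvdG (in_setT t)); exists b.
have iota_real_Qn (x : L) : exists2 b, QnC b = iota x & iota x \is Creal.
  pose P c := exists2 b, QnC b = c & c \is Creal.
  apply: (rmorph_adjoin_closed (io := iota) (P := P) (rs := r)).
  - by move=> a; exists (ratr a); rewrite ?fmorph_rat ?Creal_Crat ?Crat_rat.
  - by move=> u v [bu <- ru] [bv <- rv]; exists (bu + bv); rewrite ?rmorphD ?realD.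
  - by move=> u v [bu <- ru] [bv <- rv]; exists (bu * bv); rewrite ?rmorphM ?realM.
  - move=> y ry; have eig_y : eigenvalue A (iota y) by rewrite heig map_f.
    have [b Db] := eig_Qn _ eig_y.
    by exists b => //; apply: cayley_eigenvalue_real eig_y.
  by rewrite hgen memvf.
have [g ->] := num_field_primitive_element L.
have [b Db real_g] := iota_real_Qn g; rewrite -Db in real_g.
rewrite (adjoin_degree_minCpoly iota) -Db -(adjoin_degree_minCpoly QnC).
exact: cyclotomic_real_deg_dvd hn prim_w genQn real_g.
Qed.
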